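(* Let $N\ge1$, $1\le S\le N$, $L$ a band-width vector, $\dot W$ an $L$-admissible matrix, $W_\varepsilon=\mathrm{Id}+\varepsilon\dot W$, $k\in\mathbb Z$, and $\beta\in\mathbb R^S$ such that $e^{-2\pi ik\beta_1},\dots,e^{-2\pi ik\beta_S}$ are pairwise distinct. Put $P_{\varepsilon,\beta}=D_{k,\beta,L}W_\varepsilon$. Suppose that for every sufficiently small $\varepsilon>0$ we are given a unit-norm $f_\varepsilon\in\mathbb C^N$ and $\lambda_\varepsilon\in\mathbb C$ with $P_{\varepsilon,\beta}f_\varepsilon=\lambda_\varepsilon f_\varepsilon$ and $\lambda_\varepsilon\to e^{-2\pi ik\beta_s}$ as $\varepsilon\to0$ for some $s\in\{1,\dots,S\}$. Then every accumulation point of $\{f_\varepsilon\}$ as $\varepsilon\to0$ is an eigenvector of $\hat P_{k,\beta,L}$.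
   Context: A band-width vector is $L=(L_1,\dots,L_S)$ of positive integers with $\sum_sL_s=N$; $N_0=0$, $N_s=N_{s-1}+L_s$, $B_s=\{j:N_{s-1}<j\le N_s\}$. $D_{k,\beta,L}$ is the diagonal matrix with $j$-th entry $e^{-2\pi ik\beta_s}$ for $j\in B_s$. $\dot W$ is $L$-admissible if it is real symmetric and (1) $\dot W_{ij}\ge0$ for $i\ne j$, $\sum_j\dot W_{ij}=0$ for all $i$; (2) $\dot W$ has $N$ distinct eigenvalues; (3) each $\hat W_s=(\dot W_{jk})_{j,k\in B_s}$ has $L_s$ distinct eigenvalues. $\hat W_L$ is block diagonal with blocks $\hat W_1,\dots,\hat W_S$ and $\hat P_{k,\beta,L}=D_{k,\beta,L}\hat W_L$. *)

From HB Require Import structures.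
From mathcomp Require Import all_boot all_order all_algebra.
From mathcomp Require Import all_classical all_reals all_analysis.
From mathcomp Require Import complex.
Set Implicit Arguments. Unset Strict Implicit. Unset Printing Implicit Defensive.
Import Order.TTheory GRing.Theory Num.Theory.
Local Open Scope ring_scope.
Local Open Scope complex_scope.

Section Defs.
Variable R : realType.
Local Notation C := R[i].

Definition expi (x : R) : C := Complex (cos x) (sin x).

Definition bandwidth (N S : nat) (L : 'I_S -> nat) : Prop :=
  (forall s, (0 < L s)%N) /\ (\sum_(s < S) L s)%N = N.

(* N_{s-1} (with 0-based block index s) *)
Definition Nprev (S : nat) (L : 'I_S -> nat) (s : 'I_S) : nat :=
  (\sum_(t < S | (t < s)%N) L t)%N.

(* j (0-based) lies in block B_s, i.e. N_{s-1} < j+1 <= N_s *)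
Definition inblock (S : nat) (L : 'I_S -> nat) (s : 'I_S) (j : nat) : bool :=
  (Nprev L s <= j)%N && (j < Nprev L s + L s)%N.

Definition mxget (N : nat) (A : 'M[R]_N) (i j : nat) : R :=
  match insub i, insub j with
  | Some i', Some j' => A i' j'
  | _, _ => 0
  end.

Definition blockmx (N S : nat) (L : 'I_S -> nat) (W : 'M[R]_N) (s : 'I_S)
  : 'M[R]_(L s) :=
  \matrix_(a < L s, b < L s) mxget W (Nprev L s + a) (Nprev L s + b).

Definition distinct_eigs (n : nat) (A : 'M[R]_n) : Prop :=
  exists ev : 'I_n -> R, injective ev /\ forall i, eigenvalue A (ev i).

Definition admissible (N S : nat) (L : 'I_S -> nat) (W : 'M[R]_N) : Prop :=
  [/\ W^T = W,
      (forall i j, i != j -> 0 <= W i j),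
      (forall i, \sum_j W i j = 0),
      distinct_eigs W
    & forall s, distinct_eigs (blockmx L W s)].

Definition cmx (N : nat) (A : 'M[R]_N) : 'M[C]_N := map_mx (fun x => x%:C) A.

Definition Dmx (N S : nat) (L : 'I_S -> nat) (k : int) (beta : 'I_S -> R)
  : 'M[C]_N :=
  \matrix_(i, j) (if i == j then
     \sum_(s < S | inblock L s i) expi (- (2 * pi * k%:~R * beta s))
   else 0).

Definition What (N S : nat) (L : 'I_S -> nat) (W : 'M[R]_N) : 'M[R]_N :=
  \matrix_(i, j) (if [exists s, inblock L s i && inblock L s j]
                  then W i j else 0).

Definition Phat (N S : nat) (L : 'I_S -> nat) (k : int) (beta : 'I_S -> R)
  (W : 'M[R]_N) : 'M[C]_N := Dmx N L k beta *m cmx (What L W).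

Definition Peps (N S : nat) (L : 'I_S -> nat) (k : int) (beta : 'I_S -> R)
  (W : 'M[R]_N) (eps : R) : 'M[C]_N :=
  Dmx N L k beta *m cmx (1%:M + eps *: W).

(* squared Euclidean norm of a complex vector (a nonnegative real in C) *)
Definition vnorm2 (N : nat) (f : 'cV[C]_N) : C := \sum_j `|f j 0| ^+ 2.

End Defs.

From HB Require Import structures.
From mathcomp Require Import all_boot all_order all_algebra.
From mathcomp Require Import all_classical all_reals all_analysis.
From mathcomp Require Import complex.
From mathcomp Require Import lra ring zify.
Set Implicit Arguments. Unset Strict Implicit. Unset Printing Implicit Defensive.
Import Order.TTheory GRing.Theory Num.Theory Normc.
Local Open Scope ring_scope.
Local Open Scope complex_scope.

(* Read the eigen-equation P_eps f = lam f row by row: D_ii (f_i + eps (W f)_i) = lam f_i.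
   Off the block B_s the diagonal entry D_ii is a phase different from e^{-2 pi i k beta_s},
   so |D_ii - lam| stays bounded below while (D_ii - lam) f_i = O(eps); hence g vanishes off
   B_s.  On B_s all D_ii equal that phase, so eliminating lam from two rows gives
   (W f)_i f_j = (W f)_j f_i, which passes to the limit: (W g)_i = mu g_i on B_s for one mu.
   As g is supported in B_s, \hat W g agrees with W g there, so
   \hat P g = e^{-2 pi i k beta_s} mu g. *)

Section ComplexNorm.
Variable R : rcfType.
Implicit Types (a : R) (x y z : R[i]).

Lemma normcE z : `|z| = (normc z)%:C.
Proof. by []. Qed.

Lemma normc_ge0 z : 0 <= normc z.
Proof. by case: z => a b; exact: sqrtr_ge0. Qed.

Lemma normc_real a : normc a%:C = `|a|.
Proof. by rewrite /= expr0n addr0 sqrtr_sqr. Qed.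

Lemma normc_sum (I : Type) (r : seq I) (P : pred I) (F : I -> R[i]) :
  normc (\sum_(i <- r | P i) F i) <= \sum_(i <- r | P i) normc (F i).
Proof.
elim/big_ind2: _ => [|x1 a1 x2 a2 le1 le2|//]; first by rewrite normc0.
exact: le_trans (le_normcD _ _) (lerD le1 le2).
Qed.

Lemma normc_le_pos_eq0 z : (forall e, 0 < e -> normc z <= e) -> z = 0.
Proof.
move=> small; apply: eq0_normc; apply/eqP; rewrite eq_le normc_ge0 andbT.
by apply/ler_addgt0Pr => e /small; rewrite add0r.
Qed.

Lemma normc_mulB_le x y x' y' :
  normc (x * y - x' * y') <= normc x * normc (y - y') + normc (x - x') * normc y'.
Proof.
have -> : x * y - x' * y' = x * (y - y') + (x - x') * y' by ring.
by rewrite -!normcM le_normcD.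
Qed.

Lemma normc_eigen_row_defect (d lam x w : R[i]) (eps M : R) :
  0 <= eps -> normc d <= 1 -> normc w <= M ->
  d * (x + eps%:C * w) = lam * x -> normc (d - lam) * normc x <= eps * M.
Proof.
move=> eps_ge0 d_le1 w_leM row; rewrite -normcM.
have -> : (d - lam) * x = - (eps%:C * (d * w)).
  transitivity (d * (x + eps%:C * w) - lam * x - eps%:C * (d * w)); first by ring.
  by rewrite row subrr sub0r.
rewrite normcN !normcM normc_real ger0_norm // ler_wpM2l //.
by rewrite -[M]mul1r ler_pM ?normc_ge0.
Qed.

End ComplexNorm.

Lemma eigen_rows_cross (F : idomainType) (e lam c xi xj wi wj : F) :
  e * c != 0 -> e * (xi + c * wi) = lam * xi -> e * (xj + c * wj) = lam * xj ->
  wi * xj = wj * xi.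
Proof.
move=> ec_neq0 row_i row_j; apply: (mulIf ec_neq0).
transitivity ((e * (xi + c * wi) - e * xi) * xj); first by ring.
rewrite row_i; transitivity ((e * (xj + c * wj) - e * xj) * xi); last by ring.
by rewrite row_j; ring.
Qed.

Section Vectors.
Variable R : realType.
Local Notation C := R[i].

Lemma normc_entry_sqr_le (N : nat) (v : 'cV[C]_N) j :
  (normc (v j 0) ^+ 2)%:C <= vnorm2 v.
Proof.
rewrite rmorphXn /vnorm2 (bigD1 j) //= lerDl.
by apply: sumr_ge0 => l _; rewrite exprn_ge0.
Qed.

Lemma normc_entry_lt (N : nat) (v : 'cV[C]_N) j r :
  0 < r -> vnorm2 v < (r ^+ 2)%:C -> normc (v j 0) < r.
Proof.
move=> r_gt0 /(le_lt_trans (normc_entry_sqr_le v j)).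
by rewrite ltcR -ltr_sqrt ?exprn_gt0 // !sqrtr_sqr !ger0_norm ?normc_ge0 ?ltW.
Qed.

Lemma normc_entry_le1 (N : nat) (v : 'cV[C]_N) j : vnorm2 v = 1 -> normc (v j 0) <= 1.
Proof.
move=> v1; have := normc_entry_sqr_le v j; rewrite v1 -[1]/(1%:C) lecR.
by rewrite expr_le1 ?normc_ge0.
Qed.

Definition mx_l1norm (m n : nat) (A : 'M[R]_(m, n)) : R := \sum_i \sum_j `|A i j|.

Lemma mx_l1norm_ge0 (m n : nat) (A : 'M[R]_(m, n)) : 0 <= mx_l1norm A.
Proof. by apply: sumr_ge0 => i _; apply: sumr_ge0. Qed.

Lemma normc_cmx_mul_le (N : nat) (A : 'M[R]_N) (v : 'cV[C]_N) i B :
  (forall l, normc (v l 0) <= B) -> normc ((cmx A *m v) i 0) <= mx_l1norm A * B.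
Proof.
move=> vB; have B_ge0 : 0 <= B := le_trans (normc_ge0 _) (vB i).
rewrite mxE; apply: le_trans (normc_sum _ _ _) _.
apply: (@le_trans _ _ (\sum_j `|A i j| * B)).
  by apply: ler_sum => j _; rewrite mxE normcM normc_real ler_wpM2l.
rewrite -mulr_suml ler_wpM2r // /mx_l1norm [leRHS](bigD1 i) //= lerDl.
by apply: sumr_ge0 => i' _; apply: sumr_ge0.
Qed.

Lemma normc_cmx_mulB_le (N : nat) (A : 'M[R]_N) (u v : 'cV[C]_N) i j r :
  r <= 1 -> (forall l, normc (v l 0) <= 1) -> (forall l, normc (u l 0 - v l 0) <= r) ->
  normc ((cmx A *m u) i 0 * u j 0 - (cmx A *m v) i 0 * v j 0) <= 3 * mx_l1norm A * r.
Proof.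
move=> r_le1 v_le1 uv_le; have r_ge0 : 0 <= r := le_trans (normc_ge0 _) (uv_le i).
have M_ge0 := mx_l1norm_ge0 A.
have u_le2 l : normc (u l 0) <= 2.
  have := le_normcD (u l 0 - v l 0) (v l 0); rewrite subrK.
  by have := uv_le l; have := v_le1 l; lra.
have Au_le : normc ((cmx A *m u) i 0) <= mx_l1norm A * 2 := normc_cmx_mul_le _ _ u_le2.
have Auv_le : normc ((cmx A *m u) i 0 - (cmx A *m v) i 0) <= mx_l1norm A * r.
  have -> : forall P Q : 'cV[C]_N, P i 0 - Q i 0 = (P - Q) i 0.
    by move=> P Q; rewrite !mxE.
  rewrite -mulmxBr.
  by apply: normc_cmx_mul_le => l; rewrite !mxE.
apply: le_trans (normc_mulB_le _ _ _ _) _.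
have := ler_pM (normc_ge0 _) (normc_ge0 _) Au_le (uv_le j).
have := ler_pM (normc_ge0 _) (normc_ge0 _) Auv_le (v_le1 j).
nra.
Qed.

End Vectors.

Section Blocks.
Variables (S : nat) (L : 'I_S -> nat).

Lemma Nprev_ltn_leq (t u : 'I_S) : (t < u)%N -> (Nprev L t + L t <= Nprev L u)%N.
Proof.
move=> lt_tu; have -> : (Nprev L t + L t = \sum_(v < S | (v <= t)%N) L v)%N.
  rewrite [RHS](bigD1 t) //= addnC; congr (_ + _); apply: eq_bigl => v /=.
  by rewrite -val_eqE /= ltn_neqAle andbC.
rewrite /Nprev [leqRHS]big_mkcond [leqLHS]big_mkcond /=; apply: leq_sum => v _.
by case: ifP; case: ifP => //; lia.
Qed.

Lemma inblock_inj (t u : 'I_S) j : inblock L t j -> inblock L u j -> t = u.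
Proof.
wlog le_tu : t u / (t <= u)%N.
  move=> wlog_le; case: (leqP t u) => [/wlog_le//|/ltnW le_ut bu bt].
  by rewrite (wlog_le u t).
move=> /andP [_ lt_j_t] /andP [le_u_j _]; apply: val_inj; apply/eqP.
rewrite eqn_leq le_tu leqNgt /=; apply/negP => /Nprev_ltn_leq; lia.
Qed.

End Blocks.

Section BlockDiagonal.
Variables (R : realType) (N S : nat) (L : 'I_S -> nat) (k : int) (beta : 'I_S -> R).
Local Notation Dm := (Dmx N L k beta).

Definition phase (t : 'I_S) : R[i] := expi (- (2 * pi * k%:~R * beta t)).

Lemma normc_expi (x : R) : normc (expi x) = 1.
Proof. by rewrite /= cos2Dsin2 sqrtr1. Qed.

Lemma expi_neq0 (x : R) : expi x != 0.
Proof.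
apply/eqP => /(congr1 (@normc R)).
by rewrite normc_expi normc0 => /eqP; rewrite oner_eq0.
Qed.

Lemma Dmx_mul n (A : 'M[R[i]]_(N, n)) i j : (Dm *m A) i j = Dm i i * A i j.
Proof.
rewrite mxE (bigD1 i) //= big1 ?addr0 // => i' ne_i'i.
by rewrite mxE eq_sym (negbTE ne_i'i) mul0r.
Qed.

Lemma Dmx_inblock t (i : 'I_N) : inblock L t i -> Dm i i = phase t.
Proof.
move=> it; rewrite mxE eqxx (bigD1 t) //= big1 ?addr0 // => u /andP [iu ne_ut].
by rewrite (inblock_inj iu it) eqxx in ne_ut.
Qed.

Lemma normc_Dmx_le1 (i : 'I_N) : normc (Dm i i) <= 1.
Proof.
have [t it | noblock] := pickP (fun t => inblock L t i).
  by rewrite (Dmx_inblock it) normc_expi.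
by rewrite mxE eqxx big_pred0 // normc0.
Qed.

Lemma Dmx_neq_phase t (i : 'I_N) :
  injective phase -> ~~ inblock L t i -> Dm i i != phase t.
Proof.
move=> phase_inj not_it; have [u iu | noblock] := pickP (fun u => inblock L u i).
  rewrite (Dmx_inblock iu) (inj_eq phase_inj); apply: contraNneq not_it.
  by move=> <-.
by rewrite mxE eqxx big_pred0 // eq_sym expi_neq0.
Qed.

Lemma Peps_mul (W : 'M[R]_N) (eps : R) (F : 'cV[R[i]]_N) :
  Peps L k beta W eps *m F = Dm *m (F + eps%:C *: (cmx W *m F)).
Proof.
by rewrite /Peps /cmx map_mxD map_mxZ map_mx1 -mulmxA mulmxDl mul1mx scalemxAl.
Qed.

Lemma What_mul_supported (W : 'M[R]_N) s (v : 'cV[R[i]]_N) (i : 'I_N) :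
  (forall j : 'I_N, ~~ inblock L s j -> v j 0 = 0) ->
  (cmx (What L W) *m v) i 0 = if inblock L s i then (cmx W *m v) i 0 else 0.
Proof.
move=> v_supp; rewrite !mxE; case: ifP => i_s.
  apply: eq_bigr => j _; rewrite !mxE.
  have [j_s | ] := boolP (inblock L s j); last by move/v_supp->; rewrite !mulr0.
  have -> // : [exists t, inblock L t i && inblock L t j].
  by apply/existsP; exists s; rewrite i_s j_s.
apply: big1 => j _; rewrite !mxE.
have [j_s | ] := boolP (inblock L s j); last by move/v_supp->; rewrite mulr0.
case: existsP => [[t /andP [it jt]] | _]; last by rewrite mul0r.
by rewrite (inblock_inj jt j_s) i_s in it.
Qed.

Lemma Phat_block_eigen (W : 'M[R]_N) s (mu : R[i]) (v : 'cV[R[i]]_N) :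
  (forall j : 'I_N, ~~ inblock L s j -> v j 0 = 0) ->
  (forall i : 'I_N, inblock L s i -> (cmx W *m v) i 0 = mu * v i 0) ->
  Phat L k beta W *m v = (phase s * mu) *: v.
Proof.
move=> v_supp Wv_eig; apply/matrixP => i j; rewrite (ord1 j).
rewrite -mulmxA Dmx_mul (What_mul_supported _ _ v_supp) [RHS]mxE.
case: ifP => i_s; first by rewrite Wv_eig // (Dmx_inblock i_s) mulrA.
by rewrite v_supp ?i_s // !mulr0.
Qed.

End BlockDiagonal.

Section Accumulation.
Variables (R : realType) (N S : nat) (L : 'I_S -> nat) (W : 'M[R]_N) (k : int).
Variables (beta : 'I_S -> R) (f : R -> 'cV[R[i]]_N) (lam : R -> R[i]) (eps0 : R).
Variables (s : 'I_S) (g : 'cV[R[i]]_N).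
Local Notation Dm := (Dmx N L k beta).

Hypothesis phase_inj : injective (phase k beta).
Hypothesis f_eigen : forall eps, 0 < eps < eps0 ->
  vnorm2 (f eps) = 1 /\ Peps L k beta W eps *m f eps = lam eps *: f eps.
Hypothesis lam_cvg : forall d : R, 0 < d -> exists2 eta : R, 0 < eta &
  forall eps, 0 < eps < eta -> eps < eps0 -> `|lam eps - phase k beta s| < d%:C.
Hypothesis g_acc : forall d eta : R, 0 < d -> 0 < eta ->
  exists eps, [/\ 0 < eps, eps < eta, eps < eps0 & vnorm2 (f eps - g) < d%:C].

Lemma f_entry_le1 eps l : 0 < eps < eps0 -> normc (f eps l 0) <= 1.
Proof. by move=> /f_eigen [f1 _]; apply: normc_entry_le1. Qed.

Lemma f_row eps i : 0 < eps < eps0 ->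
  Dm i i * (f eps i 0 + eps%:C * (cmx W *m f eps) i 0) = lam eps * f eps i 0.
Proof.
move=> /f_eigen [_ /(congr1 (fun M : 'cV_N => M i 0))].
by rewrite Peps_mul Dmx_mul !mxE.
Qed.

Lemma g_acc_entries r eta : 0 < r -> 0 < eta -> exists eps,
  [/\ 0 < eps < eps0, eps < eta & forall l, normc (g l 0 - f eps l 0) < r].
Proof.
move=> r_gt0 eta_gt0; have [eps [eps_gt0 lt_eps_eta lt_eps_eps0 close]] :=
  g_acc (exprn_gt0 2 r_gt0) eta_gt0.
exists eps; split=> [|//|l]; first by rewrite eps_gt0.
by rewrite -normcN opprB; have := normc_entry_lt l r_gt0 close; rewrite !mxE.
Qed.

Lemma g_neq0 : g != 0.
Proof.
apply/eqP => g0; have [eps [eps_gt0 _ lt_eps_eps0]] := g_acc ltr01 ltr01.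
have [f1 _] := f_eigen (introT andP (conj eps_gt0 lt_eps_eps0)).
by rewrite g0 subr0 f1 ltxx.
Qed.

Lemma g_offblock_eq0 (i : 'I_N) : ~~ inblock L s i -> g i 0 = 0.
Proof.
move=> not_i_s; apply: normc_le_pos_eq0 => delta delta_gt0.
set c := normc (Dm i i - phase k beta s).
have c_gt0 : 0 < c.
  rewrite lt_def normc_ge0 andbT; apply: contraNneq (Dmx_neq_phase phase_inj not_i_s).
  by move/eq0_normc/eqP; rewrite subr_eq0.
set M := mx_l1norm W.
have M_ge0 : 0 <= M := mx_l1norm_ge0 W.
have c2_gt0 : 0 < c / 2 by lra.
have [eta1 eta1_gt0 lam_close] := lam_cvg c2_gt0.
pose eta2 := delta * c / (4 * (M + 1)).
have eta2_gt0 : 0 < eta2 by rewrite divr_gt0 ?mulr_gt0 //; lra.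
have eta_gt0 : 0 < Num.min eta1 eta2 by rewrite lt_min eta1_gt0.
have delta2_gt0 : 0 < delta / 2 by lra.
have [eps [eps_range lt_eps_eta fg_close]] := g_acc_entries delta2_gt0 eta_gt0.
move: lt_eps_eta; rewrite lt_min => /andP [lt_eps_eta1 lt_eps_eta2].
have /andP [eps_gt0 lt_eps_eps0] := eps_range.
have lam_near : normc (lam eps - phase k beta s) < c / 2.
  by rewrite -ltcR -normcE lam_close ?eps_gt0.
have D_lam_far : c / 2 <= normc (Dm i i - lam eps).
  have := le_normcD (Dm i i - lam eps) (lam eps - phase k beta s).
  by rewrite addrA subrK -/c; lra.
have defect : normc (Dm i i - lam eps) * normc (f eps i 0) <= eps * M.
  apply: normc_eigen_row_defect (f_row i eps_range); [exact: ltW | exact: normc_Dmx_le1 |].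
  by rewrite -[M]mulr1; apply: normc_cmx_mul_le => l; apply: f_entry_le1.
have f_small : normc (f eps i 0) < delta / 2.
  have := ler_wpM2r (normc_ge0 (f eps i 0)) D_lam_far.
  move: lt_eps_eta2; rewrite /eta2 ltr_pdivlMr; last by lra.
  by nra.
have := le_normcD (f eps i 0) (g i 0 - f eps i 0); rewrite addrC subrK.
by have := fg_close i; lra.
Qed.

Lemma g_block_cross (i j : 'I_N) : inblock L s i -> inblock L s j ->
  (cmx W *m g) i 0 * g j 0 = (cmx W *m g) j 0 * g i 0.
Proof.
move=> i_s j_s; apply/eqP; rewrite -subr_eq0; apply/eqP.
apply: normc_le_pos_eq0 => delta delta_gt0.
set M := mx_l1norm W.
have M_ge0 : 0 <= M := mx_l1norm_ge0 W.
pose r := Num.min 1 (delta / (6 * M + 1)).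
have r_gt0 : 0 < r by rewrite lt_min ltr01 divr_gt0 //; lra.
have [eps [eps_range _ fg_close]] := g_acc_entries r_gt0 ltr01.
have f_cross : (cmx W *m f eps) i 0 * f eps j 0 = (cmx W *m f eps) j 0 * f eps i 0.
  have row_i := f_row i eps_range; have row_j := f_row j eps_range.
  rewrite (Dmx_inblock k beta i_s) in row_i; rewrite (Dmx_inblock k beta j_s) in row_j.
  apply: eigen_rows_cross row_i row_j; rewrite mulf_neq0 ?expi_neq0 //.
  by rewrite fmorph_eq0 gt_eqF //; case/andP: eps_range.
have r_le1 : r <= 1 by rewrite ge_min lexx.
have Mr_le : 6 * M * r <= delta.
  have : r <= delta / (6 * M + 1) by rewrite ge_min lexx orbT.
  by rewrite ler_pdivlMr; [nra | lra].
have near l m : normc ((cmx W *m g) l 0 * g m 0 - (cmx W *m f eps) l 0 * f eps m 0)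
    <= 3 * M * r.
  apply: normc_cmx_mulB_le r_le1 _ _ => [n|n]; first exact: f_entry_le1.
  exact/ltW/fg_close.
have -> : (cmx W *m g) i 0 * g j 0 - (cmx W *m g) j 0 * g i 0 =
    ((cmx W *m g) i 0 * g j 0 - (cmx W *m f eps) i 0 * f eps j 0)
    - ((cmx W *m g) j 0 * g i 0 - (cmx W *m f eps) j 0 * f eps i 0).
  by rewrite f_cross; ring.
apply: le_trans (le_normcD _ _) _; rewrite normcN.
by have := near i j; have := near j i; lra.
Qed.

End Accumulation.

Theorem lemma3p6 (R : realType) (N S : nat) (L : 'I_S -> nat)
  (W : 'M[R]_N) (k : int) (beta : 'I_S -> R)
  (f : R -> 'cV[R[i]]_N) (lam : R -> R[i]) (eps0 : R) (s : 'I_S)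
  (g : 'cV[R[i]]_N) :
  (1 <= N)%N -> (1 <= S <= N)%N ->
  bandwidth N L ->
  admissible L W ->
  (forall t u : 'I_S,
     expi (- (2 * pi * k%:~R * beta t)) = expi (- (2 * pi * k%:~R * beta u)) ->
     t = u) ->
  0 < eps0 ->
  (forall eps, 0 < eps < eps0 ->
     vnorm2 (f eps) = 1 /\ Peps L k beta W eps *m f eps = lam eps *: f eps) ->
  (forall d : R, 0 < d -> exists2 eta : R, 0 < eta &
     forall eps, 0 < eps < eta -> eps < eps0 ->
       `|lam eps - expi (- (2 * pi * k%:~R * beta s))| < d%:C) ->
  (* g is an accumulation point of f_eps as eps -> 0+ *)
  (forall d eta : R, 0 < d -> 0 < eta ->
     exists eps, [/\ 0 < eps, eps < eta, eps < eps0 & vnorm2 (f eps - g) < d%:C]) ->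
  g != 0 /\ exists mu : R[i], Phat L k beta W *m g = mu *: g.
Proof.
move=> _ _ _ _ phase_inj _ f_eigen lam_cvg g_acc.
have g_supp := g_offblock_eq0 phase_inj f_eigen lam_cvg g_acc.
have g_nz := g_neq0 f_eigen g_acc.
split=> //; have /matrix0Pn [j0 [c gj0]] := g_nz; rewrite (ord1 c) in gj0.
have j0_s : inblock L s j0 by apply: contraNT gj0 => /g_supp ->.
exists (phase k beta s * ((cmx W *m g) j0 0 / g j0 0)).
apply: Phat_block_eigen g_supp _ => i i_s.
apply: (mulIf gj0); rewrite mulrAC divfK //.
exact: (g_block_cross f_eigen g_acc i_s j0_s).
Qed.
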